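(* Let $\mu\in\mathrm{i}\mathbb{R}\setminus\{0\}$ be such that $\mu^{-1}D^{-1}+I^{(-1)}$ is nonsingular, and let $z(\mu):=e_m^{\mathsf T}\left(\mu^{-1}D^{-1}+I^{(-1)}\right)^{-1}e_m$. Then $|z(\mu)-1|=1$.
   Context: $M\ge1$, $m=2M+1$, $h>0$, $T>0$. Sinc time points $t_j=\dfrac{T e^{jh}}{1+e^{jh}}$, $j=-M,\dots,M$. $D=h\,\mathrm{diag}\big(t_{-M}(T-t_{-M})/T,\dots,t_M(T-t_M)/T\big)$. $I^{(-1)}\in\mathbb{R}^{m\times m}$ is the Toeplitz matrix with entries $I^{(-1)}_{l,j}=\frac12+\int_0^{l-j}\frac{\sin(\pi t)}{\pi t}\,dt$. $e_m=(1,\dots,1)^{\mathsf T}\in\mathbb{R}^m$. *)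

From Stdlib Require Import Reals.
From Coquelicot Require Hierarchy RInt.
From HB Require Import structures.
From mathcomp Require Import all_boot all_order all_algebra.
From mathcomp Require Import Rstruct.
From mathcomp.real_closed Require Import complex.

Unset Printing Implicit Defensive.
Import Order.TTheory GRing.Theory Num.Theory.
Local Open Scope ring_scope.

Definition sinc (t : R) : R :=
  if Req_EM_T t 0 then 1 else Rdiv (sin (Rmult PI t)) (Rmult PI t).

(* oriented integral  int_0^x sinc(t) dt  (equals -int_x^0 for x < 0) *)
Definition Si (x : R) : R := @Coquelicot.RInt.RInt Coquelicot.Hierarchy.R_CompleteNormedModule sinc 0 x.

Definition RC (x : R) : R[i] := (x%:C)%C.

(* m = 2M+1 ; index i : 'I_m corresponds to j = i - M in {-M,...,M} *)
Definition msz (M : nat) : nat := (2 * M).+1.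

Definition tpt (M : nat) (h T : R) (i : 'I_(msz M)) : R :=
  let x := (i%:R - M%:R) * h in T * exp x / (1 + exp x).

Definition Dmat (M : nat) (h T : R) : 'M[R[i]]_(msz M) :=
  \matrix_(l, j) (if l == j then
     RC (h * (tpt M h T l * (T - tpt M h T l) / T)) else 0).

Definition Imat (M : nat) : 'M[R[i]]_(msz M) :=
  \matrix_(l, j) RC (2^-1 + Si ((l : nat)%:R - (j : nat)%:R)).

Definition evec (M : nat) : 'cV[R[i]]_(msz M) := const_mx 1.

Definition Amat (M : nat) (h T : R) (mu : R[i]) : 'M[R[i]]_(msz M) :=
  mu^-1 *: invmx (Dmat M h T) + Imat M.

Definition zval (M : nat) (h T : R) (mu : R[i]) : R[i] :=
  ((evec M)^T *m invmx (Amat M h T mu) *m evec M) ord0 ord0.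

(* Let A := mu^{-1} D^{-1} + I^{(-1)}, e := e_m and z := e^T A^{-1} e.
   The theorem follows from the identity

       A + A^H = e e^T                                             (#)

   (A^H the conjugate transpose), through a purely algebraic fact: if an
   invertible complex matrix A and a column e satisfy A + A^H = e e^H, then
   with x := A^{-1} e the number z := e^H x satisfies
       z + conj z = x^H (A + A^H) x = |z|^2,
   which says exactly that |z - 1|^2 = 1.  Identity (#) has two halves:
   D is a real diagonal matrix and mu is purely imaginary, so the term
   mu^{-1} D^{-1} is skew-Hermitian; and the sine integral Si is odd, so
   I^{(-1)} + (I^{(-1)})^T has every entry equal to
   (1/2 + Si k) + (1/2 - Si k) = 1.
   The file first proves that Si is odd (sinc is even and continuous), then
   the algebraic fact over an arbitrary algebraically closed field with
   conjugation ('numClosedFieldType'), then (#), and concludes. *)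

From Stdlib Require Import Reals Lra.
From mathcomp Require Import all_boot all_order all_algebra.
From mathcomp Require Import Rstruct.
From mathcomp Require Import sesquilinear spectral ring.
From mathcomp.real_closed Require Import complex.
From Coquelicot Require Import Coquelicot.
Import Order.TTheory GRing.Theory Num.Theory.

Section SineIntegral.
Local Open Scope R_scope.

Lemma PI_mult_neq0 (t : R) : t <> 0 -> PI * t <> 0.
Proof. by move=> t_neq0 /Rmult_integral [/PI_neq0 | /t_neq0]. Qed.

Lemma sincE (t : R) : t <> 0 -> sinc t = sin (PI * t) / (PI * t).
Proof. by move=> t_neq0; rewrite /sinc; case: Req_EM_T. Qed.

Lemma sinc_even (t : R) : sinc (- t) = sinc t.
Proof.
have [-> | t_neq0] := Req_EM_T t 0; first by rewrite Ropp_0.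
have mt_neq0 : - t <> 0 by move=> /(f_equal Ropp); rewrite Ropp_involutive Ropp_0.
rewrite !sincE // -Ropp_mult_distr_r sin_neg /Rdiv -Ropp_inv_permute.
  exact: Rmult_opp_opp.
exact: PI_mult_neq0.
Qed.

(* The removable singularity: sinc is continuous at 0, by the classical
   limit sin x / x --> 1 rescaled by pi. *)
Lemma sinc_continuous0 : continuous sinc 0.
Proof.
have lim_sinc : is_lim sinc 0 1.
  have := is_lim_comp_lin (fun x => sin x / x) PI 0 0 1.
  rewrite /= Rmult_0_r Rplus_0_r => /(_ is_lim_sinc_0 PI_neq0).
  apply: is_lim_ext_loc; exists (mkposreal 1 Rlt_0_1) => y _ y_neq0.
  by rewrite Rplus_0_r sincE.
apply/filterlim_locally => eps.
have [d Hd] := proj2 (is_lim_spec _ _ _) lim_sinc eps.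
exists d => y y_near0.
have [-> | y_neq0] := Req_EM_T y 0; first exact: ball_center.
have sinc0 : sinc 0 = 1 by rewrite /sinc; case: Req_EM_T.
by rewrite sinc0; apply: Hd.
Qed.

Lemma sinc_continuous (y : R) : continuous sinc y.
Proof.
have [-> | y_neq0] := Req_EM_T y 0; first exact: sinc_continuous0.
apply: (continuous_ext_loc _ (fun t => sin (PI * t) / (PI * t))).
  have y_pos : 0 < Rabs y by apply: Rabs_pos_lt.
  exists (mkposreal _ y_pos) => t Ht; rewrite sincE // => t0.
  move: Ht; rewrite t0 /ball /= /AbsRing_ball /abs /minus /plus /opp /=.
  rewrite Rplus_0_l Rabs_Ropp; lra.
apply/continuity_pt_filterlim/continuity_pt_div; last exact: PI_mult_neq0.
- apply: (continuity_pt_comp (fun t => PI * t) sin); last exact: continuity_sin.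
  exact/continuity_pt_mult/continuity_pt_id/continuity_pt_const.
- exact/continuity_pt_mult/continuity_pt_id/continuity_pt_const.
Qed.

(* Si is odd: substitute t -> -t in the integral of the even function sinc. *)
Lemma Si_odd (x : R) : Si (- x) = - Si x.
Proof.
have int_sinc : is_RInt sinc (- 0) (- - x) (Si x).
  rewrite Ropp_0 Ropp_involutive; apply: (RInt_correct sinc).
  by apply: ex_RInt_continuous => z _; apply: sinc_continuous.
apply: is_RInt_unique.
apply: is_RInt_ext (is_RInt_opp _ _ _ _ (is_RInt_comp_opp _ _ _ _ int_sinc)).
by move=> y _; rewrite sinc_even /opp /= Ropp_involutive.
Qed.

End SineIntegral.

Local Open Scope ring_scope.
Local Open Scope sesquilinear_scope.

Section ConjugateTranspose.
Context {C : numClosedFieldType}.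

Lemma trmxC_mul m n p (A : 'M[C]_(m, n)) (B : 'M[C]_(n, p)) :
  (A *m B) ^t* = B ^t* *m A ^t*.
Proof. by rewrite trmx_mul map_mxM. Qed.

Lemma trmxC_add m n (A B : 'M[C]_(m, n)) : (A + B) ^t* = A ^t* + B ^t*.
Proof. by rewrite linearD map_mxD. Qed.

Lemma trmxC_scale m n (a : C) (A : 'M[C]_(m, n)) : (a *: A) ^t* = a^* *: A ^t*.
Proof. by rewrite linearZ map_mxZ. Qed.

Lemma shifted_unit_circle (z : C) : z^* + z = z^* * z -> `|z - 1| = 1.
Proof.
move=> z_eq; apply/eqP; rewrite -sqrp_eq1 // normCK rmorphB rmorph1.
have -> : (z - 1) * (z^* - 1) = z^* * z - (z^* + z) + 1 by ring.
by rewrite z_eq subrr add0r.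
Qed.

(* The algebraic core: if A + A^H = e e^H, then z = e^H A^{-1} e satisfies
   z + conj z = x^H (A + A^H) x = |z|^2 for x = A^{-1} e. *)
Lemma rank_one_hermitian_part_circle {n} {A : 'M[C]_n} {e : 'cV[C]_n} :
  A \in unitmx -> A + A ^t* = e *m e ^t* ->
  `|(e ^t* *m invmx A *m e) 0 0 - 1| = 1.
Proof.
move=> A_unit A_herm; set x := invmx A *m e.
have Ax : A *m x = e by rewrite mulmxA mulmxV // mul1mx.
set Z := e ^t* *m x; rewrite -mulmxA -/x -/Z.
have Z_conj : Z ^t* = x ^t* *m A *m x by rewrite trmxC_mul trmxCK -mulmxA Ax.
have Z_quad : Z = x ^t* *m A ^t* *m x by rewrite -trmxC_mul Ax.
have Z_sum : Z ^t* + Z = Z ^t* *m Z.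
  rewrite {1}Z_conj {1}Z_quad -mulmxDl -mulmxDr A_herm.
  by rewrite /Z trmxC_mul trmxCK !mulmxA.
apply: shifted_unit_circle.
by have := congr1 (fun N : 'M[C]_1 => N 0 0) Z_sum; rewrite !mxE big_ord1 !mxE.
Qed.

Lemma conj_imaginary (mu : C) : 'Re mu = 0 -> mu^* = - mu.
Proof.
move=> /eqP; rewrite ReE mulf_eq0 invr_eq0 pnatr_eq0 orbF addr_eq0 => /eqP mu_eq.
by rewrite {2}mu_eq opprK.
Qed.

End ConjugateTranspose.

(* I^{(-1)} + (I^{(-1)})^T = e e^T, because Si is odd. *)
Lemma Imat_symmetric_part M : Imat M + (Imat M)^T = evec M *m (evec M)^T.
Proof.
apply/matrixP => l j; rewrite !mxE big_ord1 !mxE mulr1 /RC -rmorphD /=.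
have Si_swap : Si (j%:R - l%:R) = - Si (l%:R - j%:R).
  by have := Si_odd (l%:R - j%:R); rewrite Ropp_minus_distr.
rewrite Si_swap -(rmorph1 (real_complex R)); congr (real_complex R _).
by rewrite addrACA subrr addr0 [RHS](splitr 1) div1r.
Qed.

Lemma Imat_trmxC M : (Imat M) ^t* = (Imat M)^T.
Proof. by apply/matrixP => l j; rewrite !mxE; apply/conj_Creal; rewrite complex_real. Qed.

Lemma Dmat_trmxC M h T : (Dmat M h T) ^t* = Dmat M h T.
Proof.
apply/matrixP => l j; rewrite !mxE eq_sym; case: eqP => [-> | _].
  by apply/conj_Creal; rewrite complex_real.
exact: conjC0.
Qed.

Lemma evec_trmxC M : (evec M) ^t* = (evec M)^T.
Proof. by apply/matrixP => l j; rewrite !mxE conjC1. Qed.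

Lemma Amat_hermitian_part M h T mu : 'Re mu = 0 ->
  Amat M h T mu + (Amat M h T mu) ^t* = evec M *m (evec M)^T.
Proof.
move=> mu_Re; have invD_herm : (invmx (Dmat M h T)) ^t* = invmx (Dmat M h T).
  by rewrite -map_trmx map_invmx trmx_inv map_trmx Dmat_trmxC.
have mu_inv_conj : (mu^-1)^* = - mu^-1.
  by rewrite -invrN -conj_imaginary // fmorphV.
rewrite /Amat trmxC_add trmxC_scale mu_inv_conj invD_herm Imat_trmxC.
by rewrite addrACA scaleNr addrN add0r Imat_symmetric_part.
Qed.

Theorem mainTheorem6 (M : nat) (h T : R) (mu : R[i]) :
  (1 <= M)%N -> 0 < h -> 0 < T ->
  Re mu = 0 -> mu != 0 ->
  Amat M h T mu \in unitmx ->
  `| zval M h T mu - 1 | = 1.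
Proof.
move=> _ _ _ mu_Re _ A_unit.
have A_herm := Amat_hermitian_part M h T mu mu_Re.
rewrite -evec_trmxC in A_herm.
have := rank_one_hermitian_part_circle A_unit A_herm.
by rewrite evec_trmxC /zval.
Qed.
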